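(* Let $d,\ell,s,m\in\mathbb{N}$ with $d\ge\ell$, let $T\subseteq\mathbb{F}$ be a subset of size $n$, and let $r=s-\lfloor\frac{d-\ell}{n}\rfloor$. Let $Q,R\in\mathbb{F}[x]$ be univariate polynomials of degree at most $\ell$, and let $h\colon T\to\mathbb{F}_{<r}[z]$ and $w\colon T\times[r]\to\mathbb{Z}_{\ge0}$ be functions such that $w(a,i)\le\frac{n^{m-1}}{2}\big((s-i)-\frac{d-\ell}{n}\big)$ for every $(a,i)\in T\times[r]$. If $Q\ne R$, then \[\Gamma^{s,d,\ell}_w(h,Q)+\Gamma^{s,d,\ell}_w(h,R)\ge n^m\Big(s-\frac dn\Big).\]
   Context: $\mathbb{F}$ is a field and $[r]=\{0,\dots,r-1\}$. For $i\in[r+1]$, $A_i(h,R)=\{a\in T:\max\{j\in[r+1]:h(a)\equiv R(a+z)\bmod\langle z\rangle^j\}=i\}$, and \[\Gamma^{s,d,\ell}_w(h,R)=\sum_{i=0}^{r-1}\sum_{a\in A_i(h,R)}\max\Big\{n^{m-1}\Big((s-i)-\tfrac{d-\ell}{n}\Big)-w(a,i),\max_{j<i}w(a,j)\Big\}+\sum_{a\in A_r(h,R)}\max_{j<r}w(a,j)\] (maxima over empty sets ignored). *)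

From mathcomp Require Import all_boot all_order all_algebra.
Set Implicit Arguments. Unset Strict Implicit. Unset Printing Implicit Defensive.
Import Order.TTheory GRing.Theory Num.Theory.
Local Open Scope ring_scope.

Section Gamma.
Variable F : fieldType.

Definition shiftp (R : {poly F}) (a : F) : {poly F} := R \Po ('X + a%:P).

(* max { j in [r+1] : h(a) = R(a+z) mod z^j }  (j = 0 always qualifies) *)
Definition agree (r : nat) (h : F -> {poly F}) (R : {poly F}) (a : F) : nat :=
  \max_(j < r.+1 | 'X^j %| (h a - shiftp R a)) j.

Definition gterm (n s d l m : nat) (w : F -> nat -> nat) (a : F) (i : nat) : rat :=
  (n%:Q) ^ (m%:Z - 1) * ((s%:Q - i%:Q) - (d%:Q - l%:Q) / n%:Q) - (w a i)%:Q.

(* Gamma^{s,d,l}_w(h,R) with T given as a duplicate-free list, n = size T;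
   maxima over empty sets are ignored. *)
Definition Gamma (T : seq F) (r s d l m : nat) (w : F -> nat -> nat)
    (h : F -> {poly F}) (R : {poly F}) : rat :=
  \sum_(i < r) \sum_(a <- T | agree r h R a == i)
      (if (i == 0 :> nat) then gterm (size T) s d l m w a i
       else Num.max (gterm (size T) s d l m w a i) (\max_(j < i) w a j)%:Q)
  + \sum_(a <- T | agree r h R a == r)
      (if r == 0%N then 0 else (\max_(j < r) w a j)%:Q).
End Gamma.

From mathcomp Require Import all_boot all_order all_algebra.
From mathcomp Require Import ring lra.
Import Order.TTheory GRing.Theory Num.Theory.
Set Implicit Arguments. Unset Strict Implicit. Unset Printing Implicit Defensive.
Local Open Scope ring_scope.

(* For a in T let k(a) be the smaller of the agreement orders of h(a) with
   Q(a + z) and with R(a + z).  Both shifts agree with h(a) modulo z^k(a), so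
   (x - a)^k(a) divides Q - R, a nonzero polynomial of degree at most l, and
   the sum of the k(a) is at most l.
   Pointwise, with c(i) = n^(m-1)((s - i) - (d - l)/n), the contributions of a
   to the two Gammas add up to at least c(k(a)): if the two orders differ, the
   smaller one contributes its main term c(k) - w(a,k) and the larger one at
   least w(a,k); if they are equal and below r, 2 w(a,k) <= c(k); if both are
   r, c(r) <= 0.  Summing over T,
   sum_a c(k(a)) = n^m (s - (d - l)/n) - n^(m-1) sum_a k(a) >= n^m (s - d/n). *)

Lemma sum_mup_leq_size (F : fieldType) (s : seq F) (p : {poly F}) :
  uniq s -> p != 0 -> (\sum_(x <- s) mup x p <= (size p).-1)%N.
Proof.
elim: s p => [|a s IHs] p /=; first by rewrite big_nil.
case/andP=> a_notin_s uniq_s pN0.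
have [k [q]] := multiplicity_XsubC p a; rewrite pN0 /= => qNa def_p.
have qN0 : q != 0 by apply: contraNneq pN0 => q0; rewrite def_p q0 mul0r.
have XaN0 : ('X - a%:P) ^+ k != 0 by rewrite expf_neq0 ?polyXsubC_eq0.
have mup_p x : mup x p = ((a == x) * k + mup x q)%N.
  by rewrite def_p mupM // mup_XsubCX addnC; case: (a == x); rewrite ?mul1n ?mul0n.
have size_p : (size p).-1 = (k + (size q).-1)%N.
  rewrite def_p size_mul // size_exp_XsubC addnS /=.
  by rewrite addnC -!subn1 addnBA // size_poly_gt0.
rewrite big_cons size_p mup_p eqxx (mupNroot qNa) mul1n addn0 leq_add2l.
rewrite (eq_big_seq (fun x => mup x q)) ?IHs // => x x_in_s.
by rewrite mup_p; case: eqP x_in_s => // <-; rewrite (negPf a_notin_s).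
Qed.

Lemma dvdp_XsubC_shiftp (F : fieldType) (p : {poly F}) (a : F) k :
  'X^k %| shiftp p a -> ('X - a%:P) ^+ k %| p.
Proof.
case/dvdpP=> q def_shift.
rewrite -(comp_polyXaddC_K p a) -/(shiftp p a) def_shift comp_polyM comp_Xn_poly.
exact: dvdp_mull.
Qed.

Section Agreement.
Variables (F : fieldType) (r : nat) (h : F -> {poly F}).

Lemma agree_leq R a : (agree r h R a <= r)%N.
Proof. by apply/bigop.bigmax_leqP => i _; rewrite -ltnS. Qed.

Lemma dvdp_agree R a : 'X^(agree r h R a) %| h a - shiftp R a.
Proof.
rewrite /agree (bigop.bigmax_eq_arg ord0) ?expr0 ?dvd1p //.
by case: arg_maxnP; rewrite ?expr0 ?dvd1p.
Qed.

Lemma dvdp_min_agree Q R a :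
  ('X - a%:P) ^+ minn (agree r h Q a) (agree r h R a) %| Q - R.
Proof.
apply: dvdp_XsubC_shiftp.
have -> : shiftp (Q - R) a = (h a - shiftp R a) - (h a - shiftp Q a).
  by rewrite /shiftp comp_polyB; ring.
by apply: dvdp_sub; apply: dvdp_trans (dvdp_agree _ _);
  rewrite dvdp_exp2l ?geq_minr ?geq_minl.
Qed.

Lemma sum_min_agree_leq (T : seq F) (Q R : {poly F}) l :
  uniq T -> Q != R -> (size Q <= l.+1)%N -> (size R <= l.+1)%N ->
  (\sum_(a <- T) minn (agree r h Q a) (agree r h R a) <= l)%N.
Proof.
move=> uniq_T neq_QR size_Q size_R.
have QR_N0 : Q - R != 0 by rewrite subr_eq0.
have size_QR : ((size (Q - R)%R).-1 <= l)%N.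
  rewrite -subn1 leq_subLR add1n; apply: leq_trans (size_polyD _ _) _.
  by rewrite size_polyN geq_max size_Q size_R.
apply: leq_trans _ size_QR; apply: leq_trans _ (sum_mup_leq_size uniq_T QR_N0).
by apply: leq_sum => a _; rewrite mup_geq ?dvdp_min_agree.
Qed.

End Agreement.

Section Domination.
Variables (r : nat) (c v : nat -> rat).

Definition dominates (i : nat) (G : rat) : Prop :=
  [/\ (i < r)%N -> c i - v i <= G, forall j, (j < i)%N -> v j <= G
    & (r <= i)%N -> 0 <= G].

Hypothesis v_half : forall i, (i < r)%N -> 2 * v i <= c i.
Hypothesis c_r_le0 : c r <= 0.

Lemma dominates_add i1 i2 G1 G2 : (i1 <= r)%N -> (i2 <= r)%N ->
  dominates i1 G1 -> dominates i2 G2 -> c (minn i1 i2) <= G1 + G2.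
Proof.
wlog le_i12 : i1 i2 G1 G2 / (i1 <= i2)%N => [hwlog le_i1r le_i2r d1 d2|].
  case/orP: (leq_total i1 i2) => [le_i12|le_i21]; first exact: hwlog.
  by rewrite minnC addrC; apply: hwlog.
rewrite (minn_idPl le_i12) => le_i1r le_i2r [lb1 _ nn1] [lb2 ub2 nn2].
have [lt_i1r|le_ri1] := ltnP i1 r; last first.
  have i1_r : i1 = r by apply/eqP; rewrite eqn_leq le_i1r le_ri1.
  rewrite i1_r; apply: le_trans c_r_le0 _.
  by rewrite addr_ge0 ?nn1 ?nn2 ?(leq_trans le_ri1).
case: (ltngtP i1 i2) le_i12 => // [lt_i12 | eq_i12] _.
- by have := lb1 lt_i1r; have := ub2 _ lt_i12; lra.
- rewrite -eq_i12 in lb2.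
  by have := lb1 lt_i1r; have := lb2 lt_i1r; have := v_half lt_i1r; lra.
Qed.

End Domination.

Definition gmain (n s d l m i : nat) : rat :=
  n%:Q ^ (m%:Z - 1) * ((s%:Q - i%:Q) - (d%:Q - l%:Q) / n%:Q).

Lemma ler_natr_divn (R : numFieldType) (m d : nat) :
  (m %/ d)%:R <= m%:R / d%:R :> R.
Proof.
case: d => [|d]; first by rewrite divn0 invr0 mulr0.
by rewrite ler_pdivlMr ?ltr0Sn // -natrM ler_nat leq_divM.
Qed.

Lemma gmain_le0 (n s d l m : nat) :
  (0 < n)%N -> (l <= d)%N -> ((d - l) %/ n <= s)%N ->
  gmain n s d l m (s - (d - l) %/ n) <= 0.
Proof.
move=> n_gt0 le_ld le_qs; apply: mulr_ge0_le0; first by rewrite exprz_ge0 ?ler0n.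
by rewrite -!pmulrn subr_le0 -natrB ?leq_subr // subKn // -natrB // ler_natr_divn.
Qed.

Lemma sum_gmain_ge (I : Type) (t : seq I) (k : I -> nat) (s d l m : nat) :
  (0 < size t)%N -> (\sum_(x <- t) k x <= l)%N ->
  (size t)%:Q ^+ m * (s%:Q - d%:Q / (size t)%:Q)
    <= \sum_(x <- t) gmain (size t) s d l m (k x).
Proof.
set n := size t; move=> n_gt0 sum_k_le.
have nN0 : n%:Q != 0 by rewrite pnatr_eq0 -lt0n.
set A := n%:Q ^ (m%:Z - 1).
have A_ge0 : 0 <= A by rewrite exprz_ge0 ?ler0n.
have expE : n%:Q ^+ m = A * n%:Q by rewrite -[n%:Q in RHS]expr1z -expfzDr ?subrK.
rewrite (eq_bigr (fun x => A * (s%:Q - (d%:Q - l%:Q) / n%:Q) - A * (k x)%:Q)); last first.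
  by move=> x _; rewrite /gmain -/A; ring.
rewrite sumrB big_const_seq count_predT iter_addr_0 -mulr_sumr -mulr_natr.
rewrite -!pmulrn -natr_sum expE -subr_ge0.
have : (\sum_(x <- t) k x)%:R <= l%:R :> rat by rewrite ler_nat.
set K := (\sum_(x <- t) k x)%:R => le_Kl.
have -> : A * (s%:R - (d%:R - l%:R) / n%:R) * n%:R - A * K
          - A * n%:R * (s%:R - d%:R / n%:R) = A * (l%:R - K) by field.
by rewrite mulr_ge0 // subr_ge0.
Qed.

Section GammaPointwise.
Variables (F : fieldType) (T : seq F) (r s d l m : nat).
Variables (w : F -> nat -> nat) (h : F -> {poly F}).

Definition gamma_at (R : {poly F}) (a : F) : rat :=
  let i := agree r h R a in
  if (i < r)%N then
    (if i == 0%N then gterm (size T) s d l m w a i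
     else Num.max (gterm (size T) s d l m w a i) (\max_(j < i) w a j)%:Q)
  else (if r == 0%N then 0 else (\max_(j < r) w a j)%:Q).

Lemma Gamma_sum_gamma_at R :
  Gamma T r s d l m w h R = \sum_(a <- T) gamma_at R a.
Proof.
rewrite /Gamma; under eq_bigr => i _ do rewrite big_mkcond.
rewrite exchange_big /= [X in _ + X]big_mkcond -big_split /=.
apply: eq_bigr => a _; rewrite /gamma_at /=.
have [lt_ir|le_ri] := ltnP (agree r h R a) r.
- rewrite (bigD1 (Ordinal lt_ir)) //= eqxx (ltn_eqF lt_ir) addr0.
  rewrite [X in _ + X]big1 ?addr0 // => j neq_j.
  by case: eqP => // eq_j; case/eqP: neq_j; apply: val_inj.
- have -> : agree r h R a = r by apply/eqP; rewrite eqn_leq agree_leq.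
  rewrite eqxx big1 ?add0r // => j _.
  by rewrite eq_sym (ltn_eqF (ltn_ord j)).
Qed.

Lemma gamma_at_dominates R a :
  dominates r (gmain (size T) s d l m) (fun j => (w a j)%:Q)
    (agree r h R a) (gamma_at R a).
Proof.
have le_max_w j k : (j < k)%N -> (w a j)%:Q <= (\max_(i < k) w a i)%:Q.
  by move=> lt_jk; rewrite ler_nat (bigop.leq_bigmax (Ordinal lt_jk)).
rewrite /gamma_at; split => [lt_ir | j lt_ji | le_ri].
- by rewrite lt_ir; case: eqP => _; rewrite ?le_max lexx.
- have lt_jr := leq_trans lt_ji (agree_leq r h R a).
  rewrite (gtn_eqF (leq_ltn_trans (leq0n j) lt_jr)).
  case: ltnP => _; last exact: le_max_w.
  by rewrite (gtn_eqF (leq_ltn_trans (leq0n j) lt_ji)) le_max le_max_w ?orbT.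
- by rewrite ltnNge le_ri /=; case: eqP => _; rewrite ?lexx ?ler0n.
Qed.

End GammaPointwise.

Theorem lemma8p3 (F : fieldType) (d l s m : nat) (T : seq F)
    (Q R : {poly F}) (h : F -> {poly F}) (w : F -> nat -> nat) :
  (l <= d)%N -> uniq T -> (0 < size T)%N -> ((d - l) %/ size T <= s)%N ->
  let n := size T in
  let r := (s - (d - l) %/ n)%N in
  (size Q <= l.+1)%N -> (size R <= l.+1)%N ->
  (forall a, a \in T -> (size (h a) <= r)%N) ->
  (forall a i, a \in T -> (i < r)%N ->
     (w a i)%:Q <= (n%:Q) ^ (m%:Z - 1) / 2 * ((s%:Q - i%:Q) - (d%:Q - l%:Q) / n%:Q)) ->
  Q != R ->
  Gamma T r s d l m w h Q + Gamma T r s d l m w h R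
    >= (n%:Q) ^+ m * (s%:Q - d%:Q / n%:Q).
Proof.
move=> le_ld uniq_T n_gt0 le_qs n r size_Q size_R _ w_le neq_QR.
have sum_min_le := sum_min_agree_leq r h uniq_T neq_QR size_Q size_R.
apply: le_trans (sum_gmain_ge s d m n_gt0 sum_min_le) _.
rewrite !Gamma_sum_gamma_at -big_split /= big_seq [leRHS]big_seq.
apply: ler_sum => a a_in_T.
apply: (dominates_add _ _ (agree_leq r h Q a) (agree_leq r h R a)
                      (gamma_at_dominates T r s d l m w h Q a)
                      (gamma_at_dominates T r s d l m w h R a)).
- move=> i lt_ir; have := w_le a i a_in_T lt_ir.
  by rewrite /gmain -/n mulrAC ler_pdivlMr // mulrC.
- exact: gmain_le0.
Qed.
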